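(* Let $W,V$ be subspaces of $\mathbb{R}^n$ with $\mathbb{R}^n=W\oplus V^\perp$, and let $\mu\in\mathcal{P}_2(W)$ be a probabilistic frame for $W$ with frame operator $\mathbf{S}_\mu$. Fix $\mathbf{f}\in\mathbb{R}^n$ and suppose $\boldsymbol{\pi}_{WV^\perp}\mathbf{f}=\int_W\mathbf{x}\,\omega(\mathbf{x})\,d\mu(\mathbf{x})$ for some $\omega\in L^2(\mu,W)$. Then $$\int_W|\omega(\mathbf{x})|^2d\mu(\mathbf{x})=\int_W|\langle\mathbf{f},\boldsymbol{\pi}_{VW^\perp}\mathbf{S}_\mu^\dagger\mathbf{x}\rangle|^2d\mu(\mathbf{x})+\int_W|\omega(\mathbf{x})-\langle\mathbf{f},\boldsymbol{\pi}_{VW^\perp}\mathbf{S}_\mu^\dagger\mathbf{x}\rangle|^2d\mu(\mathbf{x}).$$ Consequently $\int_W|\omega(\mathbf{x})|^2d\mu(\mathbf{x})\ge\int_W|\langle\mathbf{f},\boldsymbol{\pi}_{VW^\perp}\mathbf{S}_\mu^\dagger\mathbf{x}\rangle|^2d\mu(\mathbf{x})$, with equality if and only if $\omega(\mathbf{x})=\langle\mathbf{f},\boldsymbol{\pi}_{VW^\perp}\mathbf{S}_\mu^\dagger\mathbf{x}\rangle$ for $\mu$-almost all $\mathbf{x}\in W$.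
   Context: $\mathcal{P}_2(W)$ denotes Borel probability measures on $\mathbb{R}^n$ concentrated on $W$ with finite second moment. $\mu\in\mathcal{P}_2(W)$ is a probabilistic frame for $W$ if there exist $0<A\le B<\infty$ with $A\|\mathbf{x}\|^2\le\int_W|\langle\mathbf{x},\mathbf{y}\rangle|^2d\mu(\mathbf{y})\le B\|\mathbf{x}\|^2$ for all $\mathbf{x}\in W$; its frame operator is $\mathbf{S}_\mu=\int_W\mathbf{y}\mathbf{y}^td\mu(\mathbf{y})$, with Moore–Penrose inverse $\mathbf{S}_\mu^\dagger$. $L^2(\mu,W)$ is the space of real-valued square-$\mu$-integrable functions on $W$. $\boldsymbol{\pi}_{WV^\perp}$ is the oblique projection onto $W$ along $V^\perp$ and $\boldsymbol{\pi}_{VW^\perp}$ the oblique projection onto $V$ along $W^\perp$. *)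

From HB Require Import structures.
From mathcomp Require Import all_boot all_order all_algebra.
From mathcomp Require Import all_classical all_reals all_analysis.
Set Implicit Arguments. Unset Strict Implicit. Unset Printing Implicit Defensive.
Import Order.TTheory GRing.Theory Num.Theory.
Import numFieldNormedType.Exports.
Local Open Scope classical_set_scope.
Local Open Scope ring_scope.

(* Conventions: R^n is represented by row vectors 'rV[R]_n.
   A subspace of R^n is represented by a square matrix U : 'M[R]_n through
   its row space; membership is (x <= U)%MS. *)

Definition Rn (R : realType) (n : nat) := g_sigma_algebraType (open : set_system 'rV[R]_n).

Definition dotv (R : realType) n (u v : 'rV[R]_n) : R := \sum_(i < n) u 0 i * v 0 i.

Definition subsp (R : realType) n (U : 'M[R]_n) : set (Rn R n) :=
  [set x : 'rV[R]_n | (x <= U)%MS].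

(* Orthogonal complement U^perp = { x | <x,u> = 0 for all u in U }
   = { x | x *m U^T = 0 } = row space of kermx U^T. *)
Definition orthc (R : realType) n (U : 'M[R]_n) : 'M[R]_n := kermx U^T.

(* Oblique projection onto A along B (when R^n = A (+) B), acting on row
   vectors by right multiplication: x *m oblique_proj A B. *)
Definition oblique_proj (R : realType) n (A B : 'M[R]_n) : 'M[R]_n := proj_mx A B.

Definition in_P2 (R : realType) n (W : 'M[R]_n) (mu : probability (Rn R n) R) : Prop :=
  mu (~` subsp W) = 0%E /\
  (\int[mu]_(y in subsp W) (dotv (y : 'rV[R]_n) y)%:E < +oo)%E.

Definition prob_frame (R : realType) n (W : 'M[R]_n) (mu : probability (Rn R n) R) : Prop :=
  exists A B : R, 0 < A /\ A <= B /\
    forall x : 'rV[R]_n, (x <= W)%MS ->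
      ((A * dotv x x)%:E <= \int[mu]_(y in subsp W) ((dotv x (y : 'rV[R]_n)) ^+ 2)%:E)%E /\
      (\int[mu]_(y in subsp W) ((dotv x (y : 'rV[R]_n)) ^+ 2)%:E <= (B * dotv x x)%:E)%E.

Definition frame_op (R : realType) n (W : 'M[R]_n) (mu : probability (Rn R n) R) : 'M[R]_n :=
  \matrix_(i < n, j < n) Rintegral mu (subsp W) (fun y : Rn R n => (y : 'rV[R]_n) 0 i * (y : 'rV[R]_n) 0 j).

(* X is the Moore-Penrose inverse of A (the four Penrose equations;
   the Moore-Penrose inverse exists and is unique). *)
Definition moore_penrose (R : realType) n (A X : 'M[R]_n) : Prop :=
  [/\ A *m X *m A = A, X *m A *m X = X, (A *m X)^T = A *m X & (X *m A)^T = X *m A].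

Definition in_L2 (R : realType) n (W : 'M[R]_n) (mu : probability (Rn R n) R)
  (w : Rn R n -> R) : Prop :=
  measurable_fun (subsp W) w /\ (\int[mu]_(x in subsp W) (w x ^+ 2)%:E < +oo)%E.

From HB Require Import structures.
From mathcomp Require Import all_boot all_order all_algebra.
From mathcomp Require Import all_classical all_reals all_analysis.
From mathcomp Require Import zify ring lra measurable_realfun.
Set Implicit Arguments. Unset Strict Implicit. Unset Printing Implicit Defensive.
Import Order.TTheory GRing.Theory Num.Theory.
Import numFieldNormedType.Exports.
Local Open Scope classical_set_scope.
Local Open Scope ring_scope.

(* With g x = <f, P_V S^+ x>, the identity is Pythagoras in L^2(mu), so it
   suffices that int g w = int g^2.  Writing g x = x c with c = S^+ P_V f^T,
   the representation of P_W f gives int g w = (P_W f) c, and the definition of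
   the frame operator gives int g^2 = c^T S c.  These agree because P_W is the
   transpose of P_V (the decompositions R^n = W + V^perp and R^n = V + W^perp
   are dual) and S^+ S S^+ = S^+ with S^+ symmetric. *)

Section L2_pythagoras.
Context d (T : measurableType d) (R : realType).
Variables (mu : {measure set T -> \bar R}) (D : set T).
Hypothesis mD : measurable D.

Lemma integrable_ge0_lty (f : T -> R) :
  measurable_fun D f -> (forall x, D x -> 0 <= f x) ->
  (\int[mu]_(x in D) (f x)%:E < +oo)%E -> mu.-integrable D (fun x => (f x)%:E).
Proof.
move=> mf f_ge0 f_lty; apply/integrableP; split; first exact/measurable_EFinP.
rewrite (eq_integral (fun x => (f x)%:E)) // => x /[!inE] Dx.
by rewrite gee0_abs // lee_fin f_ge0.
Qed.

Lemma integrable_mul_of_sqr (f g : T -> R) :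
  measurable_fun D f -> measurable_fun D g ->
  mu.-integrable D (fun x => (f x ^+ 2)%:E) ->
  mu.-integrable D (fun x => (g x ^+ 2)%:E) ->
  mu.-integrable D (fun x => (f x * g x)%:E).
Proof.
move=> mf mg if2 ig2; apply: (le_integrable mD _ _ (integrableD mD if2 ig2)).
  by apply/measurable_EFinP; exact: measurable_funM.
move=> x _; rewrite -EFinD !abse_EFin lee_fin [leRHS]ger0_norm ?addr_ge0 ?sqr_ge0 //.
by rewrite ler_norml; apply/andP; split; nra.
Qed.

Lemma L2_pythagoras (w g : T -> R) :
  measurable_fun D w -> measurable_fun D g ->
  mu.-integrable D (fun x => (w x ^+ 2)%:E) ->
  mu.-integrable D (fun x => (g x ^+ 2)%:E) ->
  (\int[mu]_(x in D) (g x * w x)%:E = \int[mu]_(x in D) (g x ^+ 2)%:E)%E ->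
  [/\ (\int[mu]_(x in D) (w x ^+ 2)%:E =
        \int[mu]_(x in D) (g x ^+ 2)%:E
        + \int[mu]_(x in D) ((w x - g x) ^+ 2)%:E)%E,
      (\int[mu]_(x in D) (g x ^+ 2)%:E <= \int[mu]_(x in D) (w x ^+ 2)%:E)%E
    & ((\int[mu]_(x in D) (w x ^+ 2)%:E = \int[mu]_(x in D) (g x ^+ 2)%:E)%E <->
       {ae mu, forall x, D x -> w x = g x})].
Proof.
move=> mw mg iw2 ig2 orth.
pose a := fine (\int[mu]_(x in D) (w x ^+ 2)%:E)%E.
pose b := fine (\int[mu]_(x in D) (g x ^+ 2)%:E)%E.
have Ia : (\int[mu]_(x in D) (w x ^+ 2)%:E)%E = a%:E.
  by rewrite fineK // integrable_fin_num.
have Ib : (\int[mu]_(x in D) (g x ^+ 2)%:E)%E = b%:E.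
  by rewrite fineK // integrable_fin_num.
have igw := integrable_mul_of_sqr mg mw ig2 iw2.
have igw2 := integrableZl mD (-2) igw.
have Idiff : (\int[mu]_(x in D) ((w x - g x) ^+ 2)%:E)%E = (a - b)%:E.
  rewrite (eq_integral (fun x =>
      (w x ^+ 2)%:E + ((-2)%:E * (g x * w x)%:E + (g x ^+ 2)%:E))%E); last first.
    by move=> x _; rewrite -EFinM -!EFinD; congr (_%:E); ring.
  rewrite integralD ?integralD ?integralZl //; last exact: integrableD.
  by rewrite orth Ia Ib -EFinM -!EFinD; congr (_%:E); ring.
have Idiff_abs : (\int[mu]_(x in D) `|((w x - g x) ^+ 2)%:E|)%E = (a - b)%:E.
  by rewrite -Idiff; apply: eq_integral => x _; rewrite gee0_abs // lee_fin sqr_ge0.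
have ba : b <= a.
  rewrite -subr_ge0 -lee_fin -Idiff.
  by apply: integral_ge0 => x _; rewrite lee_fin sqr_ge0.
rewrite Ia Ib; split.
- by rewrite Idiff -EFinD subrKC.
- by rewrite lee_fin.
have mdiff2 : measurable_fun D (fun x => ((w x - g x) ^+ 2)%:E).
  by apply/measurable_EFinP/measurable_funX/measurable_funB.
transitivity (\int[mu]_(x in D) `|((w x - g x) ^+ 2)%:E| = 0)%E.
  by rewrite Idiff_abs; split => [[->]|[/eqP]]; rewrite ?subrr // subr_eq0 => /eqP ->.
rewrite ae_eq_integral_abs //; split; apply: filterS => x + Dx => /(_ Dx).
  by rewrite /cst => -[/eqP]; rewrite sqrf_eq0 subr_eq0 => /eqP.
by move=> ->; rewrite subrr expr0n.
Qed.

End L2_pythagoras.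

Section Borel_rV.
Variables (R : realType) (n : nat).
Implicit Types (D : set (Rn R n)) (W : 'M[R]_n).

Lemma measurable_coord D (i : 'I_n) :
  measurable_fun D (fun x : Rn R n => (x : 'rV[R]_n) 0 i).
Proof.
apply: (measurable_funS measurableT (@subsetT _ D)).
apply: (@measurability _ _ _ R _ _ _ (RGenOpens.measurableE R)).
move=> _ [_ [a [b ->]] <-]; apply: measurableI => //.
apply: sub_sigma_algebra.
by move/continuousP: (@coord_continuous R 1 n 0 i); apply; exact: interval_open.
Qed.

Lemma measurable_linear_form D (c : 'cV[R]_n) :
  measurable_fun D (fun x : Rn R n => ((x : 'rV[R]_n) *m c) 0 0).
Proof.
under eq_fun => x do rewrite mxE.
apply: measurable_sum => i; apply: measurable_funM; first exact: measurable_coord.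
exact: measurable_cst.
Qed.

Lemma measurable_subsp W : measurable (subsp W).
Proof.
have mul_col (x : 'rV[R]_n) j : (x *m col j (cokermx W)) 0 0 = (x *m cokermx W) 0 j.
  by rewrite !mxE; apply: eq_bigr => k _; rewrite mxE.
have -> : subsp W = \bigcap_(j in [set: 'I_n])
    ((fun x : Rn R n => ((x : 'rV[R]_n) *m col j (cokermx W)) 0 0) @^-1` [set 0]).
  apply/seteqP; split => x /=; rewrite /subsp /= submxE.
    by move=> /eqP xW0 j _ /=; rewrite mul_col xW0 mxE.
  move=> xW0; apply/eqP/rowP => j; rewrite -mul_col [RHS]mxE; exact: xW0.
apply: fin_bigcap_measurable => [|j _]; first exact: finite_finset.
by rewrite -[X in measurable X]setTI; apply: measurable_linear_form.
Qed.

End Borel_rV.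

Section dotv.
Variables (R : realType) (n : nat).
Implicit Types u v x : 'rV[R]_n.

Lemma dotvE u v : dotv u v = (v *m u^T) 0 0.
Proof. by rewrite mxE; apply: eq_bigr => i _; rewrite mxE mulrC. Qed.

Lemma dotv_ge0 x : 0 <= dotv x x.
Proof. by apply: sumr_ge0 => i _; rewrite -expr2 sqr_ge0. Qed.

Lemma sqr_coord_le_dotv x i : x 0 i ^+ 2 <= dotv x x.
Proof.
rewrite /dotv (bigD1 i) //= -expr2 lerDl.
by apply: sumr_ge0 => j _; rewrite -expr2 sqr_ge0.
Qed.

End dotv.

Section linear_forms.
Variables (R : realType) (n : nat) (mu : {measure set Rn R n -> \bar R}).
Variables (D : set (Rn R n)) (c : 'cV[R]_n) (h : Rn R n -> R).
Hypothesis mD : measurable D.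
Hypothesis ih : forall j, mu.-integrable D (fun x => ((x : 'rV[R]_n) 0 j * h x)%:E).

Let linear_form_mulE (x : Rn R n) :
  (((x : 'rV[R]_n) *m c) 0 0 * h x)%:E = (\sum_j (c j 0)%:E * ((x : 'rV[R]_n) 0 j * h x)%:E)%E.
Proof.
rewrite mxE mulr_suml -sumEFin; apply: eq_bigr => j _.
by rewrite -EFinM mulrAC mulrC mulrA.
Qed.

Lemma integrable_linear_form_mul :
  mu.-integrable D (fun x => (((x : 'rV[R]_n) *m c) 0 0 * h x)%:E).
Proof.
rewrite (funext linear_form_mulE).
by apply: integrable_sum => // j _; exact: integrableZl.
Qed.

Lemma integral_linear_form_mul (u : 'rV[R]_n) :
  (forall j, \int[mu]_(x in D) ((x : 'rV[R]_n) 0 j * h x)%:E = (u 0 j)%:E)%E ->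
  (\int[mu]_(x in D) (((x : 'rV[R]_n) *m c) 0 0 * h x)%:E = ((u *m c) 0 0)%:E)%E.
Proof.
move=> Ih; rewrite (funext linear_form_mulE) integral_sum // => [|j].
  rewrite mxE -sumEFin; apply: eq_bigr => j _.
  by rewrite integralZl // Ih -EFinM mulrC.
exact: integrableZl.
Qed.

End linear_forms.

Section second_moments.
Variables (R : realType) (n : nat) (W : 'M[R]_n) (mu : probability (Rn R n) R).
Local Notation S := (frame_op W mu).

Lemma frame_op_tr : S^T = S.
Proof. by apply/matrixP => i j; rewrite !mxE; apply: eq_Rintegral => x _; exact: mulrC. Qed.

Hypothesis second_moment_lty :
  (\int[mu]_(y in subsp W) (dotv (y : 'rV[R]_n) y)%:E < +oo)%E.
Let mW : measurable (subsp W) := measurable_subsp W.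

Lemma integrable_coord_sqr i :
  mu.-integrable (subsp W) (fun x => ((x : 'rV[R]_n) 0 i ^+ 2)%:E).
Proof.
have mdot : measurable_fun (subsp W) (fun y : Rn R n => dotv (y : 'rV[R]_n) y).
  by apply: measurable_sum => j; apply: measurable_funM; exact: measurable_coord.
have idot := integrable_ge0_lty mdot (fun y _ => dotv_ge0 y) second_moment_lty.
apply: (le_integrable mW _ _ idot).
  by apply/measurable_EFinP; apply: measurable_funX; exact: measurable_coord.
move=> x _; rewrite !abse_EFin lee_fin !ger0_norm ?sqr_ge0 ?dotv_ge0 //.
exact: sqr_coord_le_dotv.
Qed.

Lemma integrable_coord_mul i j :
  mu.-integrable (subsp W) (fun x => ((x : 'rV[R]_n) 0 i * (x : 'rV[R]_n) 0 j)%:E).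
Proof.
by apply: integrable_mul_of_sqr; rewrite ?integrable_coord_sqr //; exact: measurable_coord.
Qed.

Lemma integral_coord_mul i j :
  (\int[mu]_(x in subsp W) ((x : 'rV[R]_n) 0 i * (x : 'rV[R]_n) 0 j)%:E = (S i j)%:E)%E.
Proof. by rewrite mxE /Rintegral fineK // integrable_fin_num // integrable_coord_mul. Qed.

Lemma integrable_linear_form_sqr (c : 'cV[R]_n) :
  mu.-integrable (subsp W) (fun x => (((x : 'rV[R]_n) *m c) 0 0 ^+ 2)%:E).
Proof.
under eq_fun => x do rewrite expr2.
apply: integrable_linear_form_mul => // j.
under eq_fun => x do rewrite mulrC.
exact: (integrable_linear_form_mul c mW (integrable_coord_mul ^~ j)).
Qed.

Lemma integral_linear_form_sqr (c : 'cV[R]_n) :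
  (\int[mu]_(x in subsp W) (((x : 'rV[R]_n) *m c) 0 0 ^+ 2)%:E =
   ((c^T *m S *m c) 0 0)%:E)%E.
Proof.
have ixc j : mu.-integrable (subsp W)
    (fun x => ((x : 'rV[R]_n) 0 j * ((x : 'rV[R]_n) *m c) 0 0)%:E).
  under eq_fun => x do rewrite mulrC.
  exact: (integrable_linear_form_mul c mW (integrable_coord_mul ^~ j)).
under eq_integral => x _ do rewrite expr2.
apply: integral_linear_form_mul => // j.
under eq_integral => x _ do rewrite mulrC.
have Ixj i : (\int[mu]_(x in subsp W) ((x : 'rV[R]_n) 0 i * (x : 'rV[R]_n) 0 j)%:E =
    (((col j S)^T) 0 i)%:E)%E by rewrite integral_coord_mul !mxE.
rewrite (integral_linear_form_mul c mW (integrable_coord_mul ^~ j) Ixj).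
by congr (_%:E); rewrite !mxE; apply: eq_bigr => i _; rewrite !mxE mulrC.
Qed.

End second_moments.

Section oblique_projections.
Variables (R : realType) (n : nat).
Implicit Type U : 'M[R]_n.

Lemma orthc_mul_tr m p U (u : 'M[R]_(m, n)) (v : 'M[R]_(p, n)) :
  (u <= U)%MS -> (v <= orthc U)%MS -> u *m v^T = 0.
Proof.
move=> /submxP[E ->]; rewrite sub_kermx => /eqP vU0.
by rewrite -mulmxA -[U *m _]trmxK trmx_mul trmxK vU0 trmx0 mulmx0.
Qed.

Lemma mxrank_orthc U : \rank (orthc U) = (n - \rank U)%N.
Proof. by rewrite mxrank_ker mxrank_tr. Qed.

Variables W V : 'M[R]_n.
Hypotheses (WV_cap0 : (W :&: orthc V = 0)%MS) (WV_full : (W + orthc V :=: 1%:M)%MS).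

Lemma orthc_cap0_dual : (V :&: orthc W = 0)%MS.
Proof.
apply/eqP/rowV0P => v; rewrite sub_capmx => /andP[vV vWp].
have Wv0 : W *m v^T = 0 by exact: orthc_mul_tr vWp.
have Vpv0 : orthc V *m v^T = 0.
  by rewrite -[LHS]trmxK trmx_mul trmxK (orthc_mul_tr vV) ?trmx0.
have: (1%:M <= W + orthc V)%MS by rewrite WV_full.
rewrite addsmxE => /submxP[E E1].
apply: trmx_inj; rewrite trmx0 -[v^T]mul1mx E1 -mulmxA mul_col_mx Wv0 Vpv0.
by rewrite col_mx0 mulmx0.
Qed.

Lemma row_full_dual : row_full (V + orthc W).
Proof.
(* the first decomposition forces \rank V = \rank W *)
have := mxrank_sum_cap W (orthc V).
rewrite WV_cap0 WV_full mxrank0 mxrank1 mxrank_orthc.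
have := mxrank_sum_cap V (orthc W).
rewrite orthc_cap0_dual mxrank0 mxrank_orthc.
have := rank_leq_col V; have := rank_leq_col W.
by rewrite /row_full; lia.
Qed.

Lemma tr_oblique_proj : (oblique_proj W (orthc V))^T = oblique_proj V (orthc W).
Proof.
set PW := oblique_proj W (orthc V); set PV := oblique_proj V (orthc W).
have PW_W : (PW <= W)%MS by rewrite -[PW]mul1mx proj_mx_sub.
have PV_V : (PV <= V)%MS by rewrite -[PV]mul1mx proj_mx_sub.
have PW_compl : (1%:M - PW <= orthc V)%MS.
  by rewrite -[PW]mul1mx proj_mx_compl_sub // WV_full.
have PV_compl : (1%:M - PV <= orthc W)%MS.
  by rewrite -[PV]mul1mx proj_mx_compl_sub // submx_full // row_full_dual.
have /eqP : PW *m (1%:M - PV)^T = 0 by exact: orthc_mul_tr PV_compl.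
rewrite linearB /= trmx1 mulmxBr mulmx1 subr_eq0 => /eqP PW_E.
have /eqP : PV *m (1%:M - PW)^T = 0 by exact: orthc_mul_tr PW_compl.
rewrite linearB /= trmx1 mulmxBr mulmx1 subr_eq0 => /eqP PV_E.
by rewrite PW_E trmx_mul trmxK -PV_E.
Qed.

End oblique_projections.

Section moore_penrose.
Variables (R : realType) (n : nat).
Implicit Types A X Y : 'M[R]_n.

Lemma moore_penrose_uniq A X Y : moore_penrose A X -> moore_penrose A Y -> X = Y.
Proof.
move=> [X1 X2 X3 X4] [Y1 Y2 Y3 Y4].
have AXY : A *m X = A *m Y.
  rewrite -X3 trmx_mul -{1}Y1 !trmx_mul !mulmxA -trmx_mul X3.
  by rewrite -mulmxA -trmx_mul Y3 mulmxA X1.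
have XAY : X *m A = Y *m A.
  rewrite -X4 trmx_mul -{1}Y1 !trmx_mul !mulmxA -trmx_mul Y4 -mulmxA -trmx_mul X4.
  by rewrite -!mulmxA [A *m (X *m A)]mulmxA X1.
by rewrite -X2 -mulmxA AXY mulmxA XAY Y2.
Qed.

Lemma moore_penrose_tr A X : A^T = A -> moore_penrose A X -> X^T = X.
Proof.
move=> AT HX; apply: (moore_penrose_uniq _ HX); case: HX => X1 X2 X3 X4; split.
- by rewrite -AT -!trmx_mul mulmxA X1.
- by rewrite -AT -!trmx_mul mulmxA X2.
- by rewrite trmx_mul trmxK AT -X4 trmx_mul AT.
- by rewrite trmx_mul trmxK AT -X3 trmx_mul AT.
Qed.

Lemma pinv_quad_form A X P (u : 'rV[R]_n) :
  X^T = X -> X *m A *m X = X ->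
  u *m P^T *m (X *m P *m u^T) = (X *m P *m u^T)^T *m A *m (X *m P *m u^T).
Proof.
move=> XT XAX.
by rewrite !trmx_mul trmxK XT -!mulmxA [X *m (A *m _)]mulmxA [X *m A *m _]mulmxA XAX.
Qed.

End moore_penrose.

Theorem proposition5p1 (R : realType) (n : nat) (W V : 'M[R]_n)
  (Hdirect : (W :&: orthc V = 0)%MS) (Hspan : (W + orthc V :=: 1%:M)%MS)
  (mu : probability (Rn R n) R) (HP2 : in_P2 W mu) (Hframe : prob_frame W mu)
  (Sdag : 'M[R]_n) (HSdag : moore_penrose (frame_op W mu) Sdag)
  (f : 'rV[R]_n) (w : Rn R n -> R) (Hw : in_L2 W mu w)
  (Hrep : forall j : 'I_n,
     ((f *m oblique_proj W (orthc V)) 0 j)%:E =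
     (\int[mu]_(x in subsp W) ((x : 'rV[R]_n) 0 j * w x)%:E)%E) :
  let g := fun x : Rn R n => dotv f ((x : 'rV[R]_n) *m Sdag *m oblique_proj V (orthc W)) in
  [/\ (\int[mu]_(x in subsp W) (w x ^+ 2)%:E =
        \int[mu]_(x in subsp W) (g x ^+ 2)%:E
        + \int[mu]_(x in subsp W) ((w x - g x) ^+ 2)%:E)%E,
      (\int[mu]_(x in subsp W) (g x ^+ 2)%:E <= \int[mu]_(x in subsp W) (w x ^+ 2)%:E)%E
    & ((\int[mu]_(x in subsp W) (w x ^+ 2)%:E = \int[mu]_(x in subsp W) (g x ^+ 2)%:E)%E <->
       {ae mu, forall x, subsp W x -> w x = g x})].
Proof.
move=> g.
pose c := Sdag *m oblique_proj V (orthc W) *m f^T.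
have -> : g = fun x => ((x : 'rV[R]_n) *m c) 0 0.
  by apply/funext => x; rewrite /g dotvE /c !mulmxA.
have mW := measurable_subsp W.
have [_ second_moment_lty] := HP2.
have [mw w2_lty] := Hw.
have iw2 := integrable_ge0_lty (measurable_funX 2 mw) (fun x _ => sqr_ge0 (w x)) w2_lty.
have ixw j := integrable_mul_of_sqr mW (measurable_coord j) mw
  (integrable_coord_sqr second_moment_lty j) iw2.
apply: L2_pythagoras => //; first exact: measurable_linear_form.
  exact: integrable_linear_form_sqr.
rewrite (integral_linear_form_mul c mW ixw (fun j => esym (Hrep j))).
rewrite integral_linear_form_sqr //; congr (_%:E).
have [_ SdSSd _ _] := HSdag.
have SdT := moore_penrose_tr (frame_op_tr W mu) HSdag.
by rewrite -[oblique_proj W _]trmxK tr_oblique_proj // /c (pinv_quad_form _ _ SdT SdSSd).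
Qed.
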